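(* Fix $E\in\mathbb R$, $\eta,\eta'>0$, a positive integer $N$, and a real symmetric $N\times N$ matrix $\mathbf H$. Let $z=E+\mathbf i\eta$, $z'=E+\mathbf i(\eta+\eta')$, $\mathbf G=(\mathbf H-z)^{-1}=\{G_{jk}\}$ and $\mathbf G'=(\mathbf H-z')^{-1}=\{G'_{jk}\}$. Then for every $j\in[1,N]$, $$\frac{\min\{|G'_{jj}|,|G_{jj}|\}}{\max\{|G'_{jj}|,|G_{jj}|\}}>1-\frac{\eta'}{\eta}.$$ *)

From HB Require Import structures.
From mathcomp Require Import all_boot all_order all_algebra.
From mathcomp Require Import complex.
Set Implicit Arguments. Unset Strict Implicit. Unset Printing Implicit Defensive.
Import Order.TTheory GRing.Theory Num.Theory.
Local Open Scope ring_scope.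

Definition cabs (R : rcfType) (x : R[i]) : R :=
  let: Complex a b := x in Num.sqrt (a ^+ 2 + b ^+ 2).

Definition resolvent (R : rcfType) (N : nat) (H : 'M[R]_N) (z : R[i]) : 'M[R[i]]_N :=
  invmx (map_mx (real_complex R) H - z%:M).

From HB Require Import structures.
From mathcomp Require Import all_boot all_order all_algebra.
From mathcomp Require Import complex.
From mathcomp Require Import reals.
From mathcomp Require Import lra.
Set Implicit Arguments.
Unset Strict Implicit.
Unset Printing Implicit Defensive.
Import Order.TTheory GRing.Theory Num.Theory.
Local Open Scope ring_scope.

(* Write [G = G(z)], [G' = G(z')] and [S], [S'] for the squared norms of
   their [j]-th rows.  The Ward identity [Im G_jj = eta S] gives
   [eta S <= |G_jj|] and [(eta + eta') S' <= |G'_jj|].  The resolvent identity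
   and the symmetry of [G] give [G'_jj - G_jj = i eta' sum_k G'_jk G_jk], so
   [||G'_jj| - |G_jj|| <= eta' (S + S') / 2 < (eta' / eta) max (|G_jj|, |G'_jj|)],
   which is the claim since [min = max - |difference|]. *)

Lemma sum_mul_le_mean_sqr (R : realFieldType) (I : finType) (a b : I -> R) :
  \sum_i a i * b i <= (\sum_i a i ^+ 2 + \sum_i b i ^+ 2) / 2.
Proof.
rewrite -big_split mulr_suml /=; apply: ler_sum => i _.
by have := sqr_ge0 (a i - b i); rewrite sqrrB; lra.
Qed.

Lemma min_div_max_gt (R : realFieldType) (p q k : R) :
  0 < Num.max q p -> `|q - p| < k * Num.max q p ->
  1 - k < Num.min q p / Num.max q p.
Proof.
move=> max_gt0; rewrite ltr_pdivlMr // mulrBl mul1r.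
by case: (lerP q p) => _; lra.
Qed.

Lemma ratio_gt_of_ward_bounds (R : realFieldType) (eta eta' g g' S S' : R) :
  0 < eta -> 0 < eta' -> 0 < S -> 0 <= S' ->
  eta * S <= g -> (eta + eta') * S' <= g' ->
  `|g' - g| <= eta' * ((S' + S) / 2) ->
  1 - eta' / eta < Num.min g' g / Num.max g' g.
Proof.
move=> eta_gt0 eta'_gt0 S_gt0 S'_ge0 le_g le_g' le_dist.
set M := Num.max g' g.
have g_le : g <= M by rewrite le_max lexx orbT.
have g'_le : g' <= M by rewrite le_max lexx.
have M_gt0 : 0 < M by rewrite (lt_le_trans _ g_le) // (lt_le_trans _ le_g) ?mulr_gt0.
have S_le : S <= M / eta by rewrite ler_pdivlMr // mulrC (le_trans le_g).
have S'_lt : S' < M / eta.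
  apply: (@le_lt_trans _ _ (M / (eta + eta'))).
    by rewrite ler_pdivlMr ?addr_gt0 // mulrC (le_trans le_g').
  by rewrite ltr_pM2l // ltf_pV2 ?posrE ?addr_gt0 // ltrDl.
apply: min_div_max_gt => //; apply: le_lt_trans le_dist _.
by rewrite mulrAC -mulrA ltr_pM2l // -/M; lra.
Qed.

Lemma resolvent_identity (F : fieldType) n (A : 'M[F]_n) (a b : F) :
  A - a%:M \in unitmx -> A - b%:M \in unitmx ->
  invmx (A - a%:M) - invmx (A - b%:M) =
  (a - b) *: (invmx (A - a%:M) *m invmx (A - b%:M)).
Proof.
move=> Aa_unit Ab_unit.
have -> : invmx (A - a%:M) - invmx (A - b%:M) =
    invmx (A - a%:M) *m ((A - b%:M) - (A - a%:M)) *m invmx (A - b%:M).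
  by rewrite mulmxBr mulmxBl -mulmxA mulmxV // mulmx1 mulVmx // mul1mx.
by rewrite opprB [_ + (_ - A)]addrC addrA subrK -raddfB mul_mx_scalar -scalemxAl.
Qed.

Lemma unitmx_sub_scalar (F : fieldType) n (A : 'M[F]_n) a :
  (A - a%:M \in unitmx) = ~~ eigenvalue A a.
Proof. by rewrite /eigenvalue /eigenspace negbK kermx_eq0 row_free_unit. Qed.

Lemma row_unitmx_neq0 (R : comUnitRingType) n (A : 'M[R]_n) i :
  A \in unitmx -> row i A != 0.
Proof.
move=> A_unit; apply/eqP => Ai0.
have := row_mul i A (invmx A); rewrite mulmxV // row1 Ai0 mul0mx.
by move/rowP/(_ i); rewrite !mxE !eqxx => /eqP; rewrite oner_eq0.
Qed.

Section ComplexModulus.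
Variable R : rcfType.
Implicit Types x y : R[i].

Lemma cabsE x : cabs x = `|x : Rcomplex R|.
Proof. by []. Qed.

Lemma cabs_ge0 x : 0 <= cabs x.
Proof. by rewrite cabsE normr_ge0. Qed.

Lemma cabsM x y : cabs (x * y) = cabs x * cabs y.
Proof. exact: Normc.normcM. Qed.

Lemma Im_le_cabs x : `|complex.Im x| <= cabs x.
Proof. by case: x => a b /=; rewrite -sqrtr_sqr ler_wsqrtr // lerDr sqr_ge0. Qed.

Lemma mulcJ_cabs x : x * x^*%C = (cabs x ^+ 2)%:C%C.
Proof. by rewrite -sqr_normc normc_def rmorphXn; case: x. Qed.

Lemma mulmx_trmx_conjc_neq0 n (v : 'rV[R[i]]_n) :
  v != 0 -> (v *m (map_mx conjc v)^T) 0 0 != 0.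
Proof.
apply: contra => /eqP vv0; apply/eqP/rowP => k; rewrite mxE.
have sum_vv0 : \sum_l v 0 l * (v 0 l)^*%C = 0.
  by rewrite -[RHS]vv0 mxE; apply: eq_bigr => l _; rewrite !mxE.
have := psumr_eq0P (fun l _ => mulcJ_ge0 (v 0 l)) sum_vv0 (i := k) isT.
by move/eqP; rewrite mulf_eq0 conjc_eq0 orbb => /eqP.
Qed.

End ComplexModulus.

Section Resolvent.
Variables (R : rcfType) (N : nat) (H : 'M[R]_N).
Hypothesis H_sym : H^T = H.
Implicit Types z : R[i].

Local Notation Hc := (map_mx (real_complex R) H).
Local Notation G := (resolvent H).
Local Notation row_sqr z j := (\sum_k cabs (G z j k) ^+ 2).

Lemma conjc_complexify : map_mx conjc Hc = Hc.
Proof. by apply/matrixP => i k; rewrite !mxE conjc_real. Qed.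

Lemma trmx_complexify : Hc^T = Hc.
Proof. by rewrite map_trmx H_sym. Qed.

Lemma eigenvalue_complexify_Im z : eigenvalue Hc z -> complex.Im z = 0.
Proof.
case/eigenvalueP => v vHc v_neq0; set w := map_mx conjc v.
have wHc : w *m Hc = z^*%C *: w.
  by rewrite -conjc_complexify /w -map_mxM vHc map_mxZ.
have tr11 (A : 'M[R[i]]_1) : A 0 0 = A^T 0 0 by rewrite mxE.
(* The 1 x 1 matrix [v Hc w^T] is its own transpose [w Hc v^T]. *)
have /(congr1 (@complex.Im R)) : z = z^*%C.
  apply: (mulIf (mulmx_trmx_conjc_neq0 v_neq0)); rewrite -/w.
  have -> : z * (v *m w^T) 0 0 = (v *m Hc *m w^T) 0 0.
    by rewrite vHc -scalemxAl [RHS]mxE.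
  rewrite tr11 !trmx_mul trmxK trmx_complexify mulmxA wHc -scalemxAl mxE.
  by rewrite tr11 trmx_mul trmxK.
by case: (z) => a b /= ?; lra.
Qed.

Lemma unitmx_complexify_sub z : complex.Im z != 0 -> Hc - z%:M \in unitmx.
Proof.
by move=> Im_z; rewrite unitmx_sub_scalar; apply: contra Im_z => /eigenvalue_complexify_Im ->.
Qed.

Lemma unitmx_resolvent z : complex.Im z != 0 -> G z \in unitmx.
Proof. by move=> Im_z; rewrite unitmx_inv unitmx_complexify_sub. Qed.

Lemma trmx_resolvent z : (G z)^T = G z.
Proof. by rewrite /resolvent trmx_inv linearB /= tr_scalar_mx trmx_complexify. Qed.

Lemma conjc_resolvent z : map_mx conjc (G z) = G z^*%C.
Proof. by rewrite /resolvent map_invmx map_mxB conjc_complexify map_scalar_mx. Qed.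

Lemma resolvent_sub_diag z1 z2 j : complex.Im z1 != 0 -> complex.Im z2 != 0 ->
  G z1 j j - G z2 j j = (z1 - z2) * \sum_k G z1 j k * G z2 j k.
Proof.
move=> Im_z1 Im_z2.
have := resolvent_identity (unitmx_complexify_sub Im_z1) (unitmx_complexify_sub Im_z2).
rewrite -/(G z1) -/(G z2) => /(congr1 (fun A : 'M_N => A j j)); rewrite !mxE => ->.
by congr (_ * _); apply: eq_bigr => k _; rewrite -[in G z2 k j]trmx_resolvent mxE.
Qed.

Lemma Im_resolvent_diag z j : complex.Im z != 0 ->
  complex.Im (G z j j) = complex.Im z * row_sqr z j.
Proof.
move=> Im_z; have Im_zJ : complex.Im z^*%C != 0 by case: (z) Im_z => a b; rewrite oppr_eq0.
have := resolvent_sub_diag j Im_z Im_zJ; rewrite -conjc_resolvent mxE.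
under eq_bigr => k _ do rewrite mxE mulcJ_cabs.
rewrite -rmorph_sum; move: (row_sqr z j) => S.
by case: (G z j j) => a b; case: (z) => x y /= /(congr1 (@complex.Im R)) /=; lra.
Qed.

Lemma Im_mul_row_sqr_le z j : 0 < complex.Im z ->
  complex.Im z * row_sqr z j <= cabs (G z j j).
Proof.
move=> Im_z; rewrite -Im_resolvent_diag ?gt_eqF //.
exact: le_trans (ler_norm _) (Im_le_cabs _).
Qed.

Lemma row_sqr_resolvent_gt0 z j : complex.Im z != 0 -> 0 < row_sqr z j.
Proof.
move=> Im_z; rewrite lt_def sumr_ge0 ?andbT => [|k _]; last exact: sqr_ge0.
apply: contra (row_unitmx_neq0 j (unitmx_resolvent Im_z)) => /eqP S0.
apply/eqP/rowP => k; rewrite !mxE; apply/eqP.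
have := psumr_eq0P (fun k _ => sqr_ge0 (cabs (G z j k))) S0 (i := k) isT.
by move/eqP; rewrite sqrf_eq0 cabsE normr_eq0.
Qed.

Lemma cabs_resolvent_sub_diag z1 z2 j : complex.Im z1 != 0 -> complex.Im z2 != 0 ->
  cabs (G z1 j j - G z2 j j) <= cabs (z1 - z2) * ((row_sqr z1 j + row_sqr z2 j) / 2).
Proof.
move=> Im_z1 Im_z2; rewrite resolvent_sub_diag // cabsM ler_wpM2l ?cabs_ge0 //.
apply: le_trans _ (sum_mul_le_mean_sqr _ _); rewrite cabsE.
by apply: le_trans (ler_norm_sum _ _ _) _; apply: ler_sum => k _; rewrite -cabsE cabsM.
Qed.

End Resolvent.

Theorem corollaryB2 (R : realType) (E eta eta' : R) (heta : 0 < eta) (heta' : 0 < eta')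
  (N : nat) (hN : (0 < N)%N) (H : 'M[R]_N) (hsym : H^T = H) (j : 'I_N) :
  let z : R[i] := Complex E eta in
  let z' : R[i] := Complex E (eta + eta') in
  let g := cabs (resolvent H z j j) in
  let g' := cabs (resolvent H z' j j) in
  Num.min g' g / Num.max g' g > 1 - eta' / eta.
Proof.
cbv zeta.
set z := Complex E eta; set z' := Complex E (eta + eta').
have Im_z : 0 < complex.Im z by [].
have Im_z' : 0 < complex.Im z' by rewrite addr_gt0.
have z'Bz : cabs (z' - z) = eta'.
  by rewrite /= subrr expr0n add0r addrAC subrr add0r sqrtr_sqr gtr0_norm.
have Im_z_neq0 := lt0r_neq0 Im_z; have Im_z'_neq0 := lt0r_neq0 Im_z'.
apply: (ratio_gt_of_ward_bounds heta heta' (row_sqr_resolvent_gt0 hsym j Im_z_neq0)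
  (ltW (row_sqr_resolvent_gt0 hsym j Im_z'_neq0))).
- exact: (Im_mul_row_sqr_le hsym j Im_z).
- exact: (Im_mul_row_sqr_le hsym j Im_z').
- rewrite -z'Bz !cabsE; apply: le_trans (ler_dist_dist _ _) _.
  by rewrite -!cabsE cabs_resolvent_sub_diag.
Qed.
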